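(* Let $D$ be a digraph rooted at $r$ and let $v \in V(D) \setminus \{r\}$. For every $I \in \mathcal{G}_{D - rv}(v)$ and every $S \in \mathfrak{S}_D(v)$ there is an $\mathcal{R} \in \mathfrak{P}_D(v)$ orthogonal to $S$ with $I \subseteq E^+(\mathcal{R})$.
   Context: Digraphs have no loops or parallel edges; $D - rv$ denotes $D$ with the edge $rv$ deleted if present. For a vertex $v$ of a digraph $H$, $\mathrm{in}_H(v)$ is the set of edges with head $v$. An $(x,y)$-path is a directed path from $x$ to $y$; an $(x,y)$-path-system is a set of pairwise internally disjoint $(x,y)$-paths. $E^+(\mathcal{P})$ is the set of terminal edges of the paths in $\mathcal{P}$. For a rooted digraph $H$ with root $r$, $\mathcal{G}_H(v)$ is the set of all $I \subseteq \mathrm{in}_H(v)$ for which there is an $(r,v)$-path-system $\mathcal{P}$ in $H$ with $E^+(\mathcal{P}) = I$. For distinct $x,y$ with $xy \notin E$, an $(x,y)$-separation is a set $S \subseteq V \setminus\{x,y\}$ meeting every $(x,y)$-path. A set of paths $\mathcal{P}$ and a vertex set $S$ are orthogonal if each path of $\mathcal{P}$ meets $S$ in exactly one vertex and $S \subseteq \bigcup_{P \in \mathcal{P}} V(P)$. An $(x,y)$-path-system (resp. $(x,y)$-separation) is Erdős–Menger if there is an $(x,y)$-separation (resp. $(x,y)$-path-system) orthogonal to it. $\mathfrak{P}_D(v)$ and $\mathfrak{S}_D(v)$ denote the sets of Erdős–Menger $(r,v)$-path-systems and Erdős–Menger $(r,v)$-separations, respectively, in $D - rv$. *)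

(* Digraphs on an arbitrary (possibly infinite) vertex type V,
   given by an edge relation E : V -> V -> Prop (no parallel edges by
   construction; looplessness is a separate hypothesis).  Edges are pairs
   (tail, head). *)
From Stdlib Require Import List.
Import ListNotations.

Section Digraphs.
Context {V : Type}.

Definition loopless (E : V -> V -> Prop) : Prop := forall x, ~ E x x.

Definition del_edge (E : V -> V -> Prop) (r v : V) : V -> V -> Prop :=
  fun a b => E a b /\ ~ (a = r /\ b = v).

Fixpoint chain (E : V -> V -> Prop) (p : list V) : Prop :=
  match p with
  | a :: ((b :: _) as q) => E a b /\ chain E q
  | _ => True
  end.

Definition is_path (E : V -> V -> Prop) (x y : V) (p : list V) : Prop :=
  hd_error p = Some x /\ last p x = y /\ chain E p /\ NoDup p.

Definition path_system (E : V -> V -> Prop) (x y : V) (P : list V -> Prop) : Prop :=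
  (forall p, P p -> is_path E x y p) /\
  (forall p q z, P p -> P q -> p <> q -> In z p -> In z q -> z = x \/ z = y).

Definition terminal_edge (p : list V) (e : V * V) : Prop :=
  exists q, p = q ++ [fst e; snd e].

Definition Eplus (P : list V -> Prop) (e : V * V) : Prop :=
  exists p, P p /\ terminal_edge p e.

Definition calG (H : V -> V -> Prop) (r v : V) (I : V * V -> Prop) : Prop :=
  (forall e, I e -> snd e = v /\ H (fst e) (snd e)) /\
  exists P, path_system H r v P /\ forall e, I e <-> Eplus P e.

Definition separation (E : V -> V -> Prop) (x y : V) (S : V -> Prop) : Prop :=
  x <> y /\ ~ E x y /\
  (forall z, S z -> z <> x /\ z <> y) /\
  (forall p, is_path E x y p -> exists z, In z p /\ S z).

Definition orthogonal (P : list V -> Prop) (S : V -> Prop) : Prop :=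
  (forall p, P p -> exists! z, In z p /\ S z) /\
  (forall z, S z -> exists p, P p /\ In z p).

Definition EM_path_system (E : V -> V -> Prop) (x y : V) (P : list V -> Prop) : Prop :=
  path_system E x y P /\ exists S, separation E x y S /\ orthogonal P S.

Definition EM_separation (E : V -> V -> Prop) (x y : V) (S : V -> Prop) : Prop :=
  separation E x y S /\ exists P, path_system E x y P /\ orthogonal P S.

Definition frakP (E : V -> V -> Prop) (r v : V) (P : list V -> Prop) : Prop :=
  EM_path_system (del_edge E r v) r v P.

Definition frakS (E : V -> V -> Prop) (r v : V) (S : V -> Prop) : Prop :=
  EM_separation (del_edge E r v) r v S.

End Digraphs.

(* Let Q be a path system orthogonal to S and P the given path system. Put a pointer on
   every path u of P at or after its last vertex in S, and follow each path q of Q until it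
   first hits v or the tail of some u behind its pointer; from there continue along u.
   The part of q before its vertex in S never meets such a tail, for otherwise S would not
   separate r from v; so the new paths still meet S exactly in the vertices of S on Q.
   Call a choice of pointers anchored if every pointer sits on such a first hit. Moving
   pointers forward shrinks the tails and so preserves first hits, hence the pointwise
   supremum of anchored choices is anchored. For this maximal choice a tail is first hit
   only at its pointer, which makes the rerouted paths internally disjoint, and every tail
   of P, hence every last edge of P, is used. *)

From Stdlib Require Import List Lia Arith Classical ClassicalEpsilon Wf_nat.
Import ListNotations.

Lemma least_witness (T : nat -> Prop) :
  (exists n, T n) -> exists n, T n /\ forall m, m < n -> ~ T m.
Proof.
  intros HT.
  destruct (dec_inh_nat_subset_has_unique_least_element T (fun n => classic (T n)) HT)
    as [n [[Tn Hmin] _]].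
  exists n. split; [exact Tn|]. intros m Hm Tm. specialize (Hmin m Tm). lia.
Qed.

Lemma greatest_witness (T : nat -> Prop) (B : nat) :
  (exists n, T n) -> (forall n, T n -> n <= B) -> exists n, T n /\ forall m, T m -> m <= n.
Proof.
  induction B as [|B IH]; intros HT Hle.
  - destruct HT as [n Tn]. exists n. split; [exact Tn|].
    intros m Tm. specialize (Hle m Tm). lia.
  - destruct (classic (T (S B))) as [TB|nTB]; [exists (S B); auto|].
    apply IH; [exact HT|]. intros n Tn. specialize (Hle n Tn).
    destruct (Nat.eq_dec n (S B)); [subst; contradiction|lia].
Qed.

Section Lists.
Context {A : Type}.

Lemma NoDup_nth_error_inj (l : list A) i j t :
  NoDup l -> nth_error l i = Some t -> nth_error l j = Some t -> i = j.
Proof.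
  intros Hl Hi Hj. apply (proj1 (NoDup_nth_error l) Hl); [|congruence].
  apply nth_error_Some. congruence.
Qed.

Lemma In_firstn_iff (l : list A) n t :
  In t (firstn n l) <-> exists i, i < n /\ nth_error l i = Some t.
Proof.
  rewrite In_iff_nth_error. split; intros [i Hi]; exists i.
  - rewrite nth_error_firstn in Hi. destruct (Nat.ltb_spec i n); [auto|discriminate].
  - rewrite nth_error_firstn. destruct (Nat.ltb_spec i n); [apply Hi|lia].
Qed.

Lemma In_skipn_iff (l : list A) n t :
  In t (skipn n l) <-> exists i, n <= i /\ nth_error l i = Some t.
Proof.
  rewrite In_iff_nth_error. split.
  - intros [i Hi]. rewrite nth_error_skipn in Hi. exists (n + i). split; [lia|exact Hi].
  - intros [i [Hi Ht]]. exists (i - n). rewrite nth_error_skipn.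
    replace (n + (i - n)) with i by lia. exact Ht.
Qed.

Lemma skipn_nth_error (l : list A) n t :
  nth_error l n = Some t -> skipn n l = t :: skipn (S n) l.
Proof.
  revert n. induction l as [|a l IH]; intros [|n] H; try discriminate.
  - injection H as <-. reflexivity.
  - exact (IH n H).
Qed.

Lemma nth_error_length_pred (l : list A) d :
  l <> [] -> nth_error l (length l - 1) = Some (last l d).
Proof.
  induction l as [|a [|b l] IH]; intros H; [congruence|reflexivity|].
  simpl in *. rewrite Nat.sub_0_r in IH. apply IH. discriminate.
Qed.

Lemma last_cons_default (l : list A) a d d' : last (a :: l) d = last (a :: l) d'.
Proof. revert a. induction l as [|b l IH]; intros a; [reflexivity|apply IH]. Qed.

Lemma last_app_cons (l1 l2 : list A) w d : last (l1 ++ w :: l2) d = last (w :: l2) d.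
Proof. induction l1 as [|a [|b l1] IH]; [reflexivity..|exact IH]. Qed.

Lemma hd_error_app_cons (l1 l2 l2' : list A) w :
  hd_error (l1 ++ w :: l2) = hd_error (l1 ++ w :: l2').
Proof. destruct l1; reflexivity. Qed.

End Lists.

Section Paths.
Context {V : Type} (E : V -> V -> Prop).

Lemma chain_app_cons l1 w l2 :
  chain E (l1 ++ w :: l2) <-> chain E (l1 ++ [w]) /\ chain E (w :: l2).
Proof.
  induction l1 as [|a [|b l1] IH]; simpl in *; [tauto|tauto|].
  rewrite IH. tauto.
Qed.

Lemma is_path_glue x y q1 q2 u1 u2 w :
  is_path E x y (q1 ++ w :: q2) -> is_path E x y (u1 ++ w :: u2) ->
  (forall t, In t q1 -> ~ In t (w :: u2)) -> is_path E x y (q1 ++ w :: u2).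
Proof.
  intros (Hq0 & _ & Hqc & Hqd) (_ & Hul & Huc & Hud) Hdis.
  apply chain_app_cons in Hqc as [Hqc _]. apply chain_app_cons in Huc as [_ Huc].
  rewrite last_app_cons in Hul.
  repeat split.
  - rewrite <- Hq0. apply hd_error_app_cons.
  - rewrite last_app_cons. exact Hul.
  - apply chain_app_cons. auto.
  - apply NoDup_app; [exact (NoDup_app_remove_r _ _ Hqd)|exact (NoDup_app_remove_l _ _ Hud)|exact Hdis].
Qed.

Lemma is_path_suffix x y l1 w l2 : is_path E x y (l1 ++ w :: l2) -> is_path E w y (w :: l2).
Proof.
  intros (_ & Hl & Hc & Hd). repeat split.
  - rewrite last_app_cons in Hl. rewrite (last_cons_default _ _ _ x). exact Hl.
  - exact (proj2 (proj1 (chain_app_cons _ _ _) Hc)).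
  - exact (NoDup_app_remove_l _ _ Hd).
Qed.

Lemma walk_contains_path x y w :
  hd_error w = Some x -> last w x = y -> chain E w -> exists p, is_path E x y p /\ incl p w.
Proof.
  destruct w as [|x0 l]; intros H; [discriminate|]. injection H as <-. intros <-.
  revert x0. induction l as [|a l IH]; intros x Hc.
  - exists [x]. repeat split; [|apply incl_refl].
    constructor; [intros []|constructor].
  - destruct Hc as [Hxa Hc]. destruct (IH a Hc) as [p [Hp Hincl]].
    change (last (x :: a :: l) x) with (last (a :: l) x).
    rewrite (last_cons_default l a a x) in Hp.
    destruct (classic (In x p)) as [Hx|Hx].
    + apply in_split in Hx as [p1 [p2 ->]]. exists (x :: p2).
      split; [exact (is_path_suffix _ _ _ _ _ Hp)|].
      intros t [<-|Ht]; [left; reflexivity|].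
      right. apply Hincl, in_or_app. right; right; exact Ht.
    + destruct Hp as (Hp0 & Hpl & Hpc & Hpd).
      destruct p as [|b p]; [discriminate|]. injection Hp0 as ->.
      exists (x :: a :: p). repeat split; auto.
      * change (last (a :: p) x = last (a :: l) x).
        rewrite (last_cons_default p a x a). exact Hpl.
      * constructor; assumption.
      * intros t [<-|Ht]; [left; reflexivity|right; apply Hincl; exact Ht].
Qed.

Lemma separation_meets_walk x y Sp w :
  separation E x y Sp -> hd_error w = Some x -> last w x = y -> chain E w ->
  exists t, In t w /\ Sp t.
Proof.
  intros (_ & _ & _ & Hsep) H0 Hl Hc.
  destruct (walk_contains_path x y w H0 Hl Hc) as [p [Hp Hincl]].
  destruct (Hsep p Hp) as [t [Ht St]]. exists t. auto.
Qed.

Lemma path_system_shared x y Ps p q t :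
  path_system E x y Ps -> Ps p -> Ps q -> In t p -> In t q -> t <> x -> t <> y -> p = q.
Proof.
  intros [_ Hdis] Hp Hq Htp Htq Hx Hy.
  destruct (classic (p = q)) as [e|ne]; [exact e|].
  destruct (Hdis p q t Hp Hq ne Htp Htq); contradiction.
Qed.

Lemma path_nth_first x y p : is_path E x y p -> nth_error p 0 = Some x.
Proof. intros [H _]. destruct p; exact H. Qed.

Lemma path_nth_last x y p : is_path E x y p -> nth_error p (length p - 1) = Some y.
Proof.
  intros (H0 & Hl & _). rewrite <- Hl. apply nth_error_length_pred.
  intros ->. discriminate.
Qed.

Lemma path_index_first x y p i : is_path E x y p -> nth_error p i = Some x -> i = 0.
Proof.
  intros Hp Hi. apply (NoDup_nth_error_inj p i 0 x); [apply Hp|exact Hi|].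
  exact (path_nth_first x y p Hp).
Qed.

Lemma path_index_last x y p i :
  is_path E x y p -> nth_error p i = Some y -> i = length p - 1.
Proof.
  intros Hp Hi. apply (NoDup_nth_error_inj p i _ y); [apply Hp|exact Hi|].
  exact (path_nth_last x y p Hp).
Qed.

End Paths.

Section Rerouting.
Context {V : Type} (G : V -> V -> Prop) (r v : V) (Sep : V -> Prop) (Q P : list V -> Prop).
Hypotheses (HSep : separation G r v Sep) (HQ : path_system G r v Q)
  (HQS : orthogonal Q Sep) (HP : path_system G r v P).

Lemma Q_path q : Q q -> is_path G r v q.
Proof. apply HQ. Qed.

Lemma P_path u : P u -> is_path G r v u.
Proof. apply HP. Qed.

Lemma sep_internal s : Sep s -> s <> r /\ s <> v.
Proof. apply HSep. Qed.

Lemma sep_index_on_Q q js s i t :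
  Q q -> nth_error q js = Some s -> Sep s -> nth_error q i = Some t -> Sep t -> i = js.
Proof.
  intros Qq Hs Ss Ht St.
  destruct (proj1 HQS q Qq) as [s0 [_ Hs0]].
  assert (t = s) as ->.
  { rewrite <- (Hs0 t), <- (Hs0 s); eauto using nth_error_In. }
  exact (NoDup_nth_error_inj q i js s (proj2 (proj2 (proj2 (Q_path q Qq)))) Ht Hs).
Qed.

Lemma sep_on_P u : P u -> exists k s, nth_error u k = Some s /\ Sep s.
Proof.
  intros Pu. destruct (proj2 (proj2 (proj2 HSep)) u (P_path u Pu)) as [s [Hs Ss]].
  apply In_nth_error in Hs as [k Hk]. eauto.
Qed.

(* Otherwise q up to t followed by u from t would be an r-v walk avoiding Sep. *)
Lemma prefix_misses_tail q js s i t u k :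
  Q q -> nth_error q js = Some s -> Sep s -> i < js -> nth_error q i = Some t ->
  P u -> nth_error u k = Some t ->
  (forall k' s', nth_error u k' = Some s' -> Sep s' -> k' <= k) -> False.
Proof.
  intros Qq Hs Ss Hi Ht Pu Hu Hlast.
  pose proof (Q_path q Qq) as Hq. pose proof (P_path u Pu) as Hup.
  rewrite <- (firstn_skipn_middle _ _ Ht) in Hq.
  rewrite <- (firstn_skipn_middle _ _ Hu) in Hup.
  destruct Hq as (Hq0 & _ & Hqc & _), Hup as (_ & Hul & Huc & _).
  apply chain_app_cons in Hqc as [Hqc _]. apply chain_app_cons in Huc as [_ Huc].
  destruct (separation_meets_walk G r v Sep (firstn i q ++ t :: skipn (S k) u) HSep)
    as [s' [Hs' Ss']].
  - rewrite <- Hq0. apply hd_error_app_cons.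
  - rewrite last_app_cons in *. exact Hul.
  - apply chain_app_cons. auto.
  - assert (Hq' : exists i', i' <= i /\ nth_error q i' = Some s').
    { apply in_app_or in Hs' as [Hs'|[<-|Hs']].
      - apply In_firstn_iff in Hs' as [i' [Hi' H]]. exists i'. split; [lia|exact H].
      - exists i. auto.
      - apply In_skipn_iff in Hs' as [k' [Hk' H]]. specialize (Hlast k' s' H Ss'). lia. }
    destruct Hq' as [i' [Hi' Hq']].
    pose proof (sep_index_on_Q q js s i' s' Qq Hs Ss Hq' Ss'). lia.
Qed.

(* A pointer assignment [x] marks the index [x u] on each path [u] of [P]; the tail of
   [u] consists of the vertices at indices [x u, ..., length u - 2], so it excludes [v]. *)
Definition past_sep (x : list V -> nat) (u : list V) : Prop :=
  x u < length u - 1 /\ forall k s, nth_error u k = Some s -> Sep s -> k <= x u.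

Definition on_tail (x : list V -> nat) (w : V) : Prop :=
  exists u k, P u /\ x u <= k < length u - 1 /\ nth_error u k = Some w.

Definition target (x : list V -> nat) (w : V) : Prop := w = v \/ on_tail x w.

Definition first_hit (x : list V -> nat) (q : list V) (j : nat) (w : V) : Prop :=
  nth_error q j = Some w /\ target x w /\
  forall i t, i < j -> nth_error q i = Some t -> ~ target x t.

Definition hit (x : list V -> nat) (u : list V) (k : nat) : Prop :=
  exists q j w, Q q /\ nth_error u k = Some w /\ first_hit x q j w.

Definition anchored (x : list V -> nat) : Prop := forall u, P u -> past_sep x u /\ hit x u (x u).

Definition ptr_le (x y : list V -> nat) : Prop := forall u, P u -> x u <= y u.

Lemma no_target_before_sep x q js s i t :
  (forall u, P u -> past_sep x u) -> Q q -> nth_error q js = Some s -> Sep s ->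
  i < js -> nth_error q i = Some t -> ~ target x t.
Proof.
  intros Hx Qq Hs Ss Hi Ht [->|(u & k & Pu & Hk & Hu)].
  - apply (path_index_last _ _ _ _ _ (Q_path q Qq)) in Ht.
    assert (js < length q) by (apply nth_error_Some; congruence). lia.
  - apply (prefix_misses_tail q js s i t u k Qq Hs Ss Hi Ht Pu Hu).
    intros k' s' H1 H2. pose proof (proj2 (Hx u Pu) k' s' H1 H2). lia.
Qed.

Lemma first_hit_after_sep x q js s j w :
  (forall u, P u -> past_sep x u) -> Q q -> nth_error q js = Some s -> Sep s ->
  first_hit x q j w -> js <= j.
Proof.
  intros Hx Qq Hs Ss (Hw & Htw & _).
  destruct (Nat.le_gt_cases js j) as [|Hj]; [assumption|].
  exfalso. exact (no_target_before_sep x q js s j w Hx Qq Hs Ss Hj Hw Htw).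
Qed.

Lemma tail_internal x w : (forall u, P u -> past_sep x u) -> on_tail x w -> w <> r /\ w <> v.
Proof.
  intros Hx (u & k & Pu & Hk & Hu). pose proof (P_path u Pu) as Hup. split; intros ->.
  - apply (path_index_first _ _ _ _ _ Hup) in Hu. subst k.
    destruct (sep_on_P u Pu) as (k0 & s & Hs & Ss).
    pose proof (proj2 (Hx u Pu) k0 s Hs Ss). assert (k0 = 0) as -> by lia.
    rewrite (path_nth_first _ _ _ _ Hup) in Hs. injection Hs as <-.
    exact (proj1 (sep_internal r Ss) eq_refl).
  - apply (path_index_last _ _ _ _ _ Hup) in Hu. lia.
Qed.

Lemma on_tail_anti x y w : ptr_le x y -> on_tail y w -> on_tail x w.
Proof.
  intros Hxy (u & k & Pu & Hk & Hu). exists u, k. pose proof (Hxy u Pu). repeat split; auto; lia.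
Qed.

Lemma first_hit_anti x y q j w :
  ptr_le x y -> target y w -> first_hit x q j w -> first_hit y q j w.
Proof.
  intros Hxy Hw (Hj & _ & Hbefore). repeat split; auto.
  intros i t Hi Ht [Htv|Htt]; apply (Hbefore i t Hi Ht); [left|right; apply (on_tail_anti x y)]; auto.
Qed.

Lemma hit_anti x y u k :
  ptr_le x y -> P u -> y u <= k < length u - 1 -> hit x u k -> hit y u k.
Proof.
  intros Hxy Pu Hk (q & j & w & Qq & Hw & Hh). exists q, j, w.
  split; [exact Qq|split; [exact Hw|]].
  apply (first_hit_anti x); auto. right. exists u, k. auto.
Qed.

Lemma first_hit_unique x q j1 w1 j2 w2 :
  first_hit x q j1 w1 -> first_hit x q j2 w2 -> j1 = j2 /\ w1 = w2.
Proof.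
  intros (H1 & T1 & B1) (H2 & T2 & B2).
  destruct (Nat.lt_total j1 j2) as [h|[<-|h]].
  - exfalso. exact (B2 j1 w1 h H1 T1).
  - split; congruence.
  - exfalso. exact (B1 j2 w2 h H2 T2).
Qed.

Lemma first_hit_exists x q : Q q -> exists j w, first_hit x q j w.
Proof.
  intros Qq.
  destruct (least_witness (fun j => exists w, nth_error q j = Some w /\ target x w))
    as [j [[w [Hw Tw]] Hmin]].
  { exists (length q - 1), v. split; [exact (path_nth_last _ _ _ _ (Q_path q Qq))|left; reflexivity]. }
  exists j, w. repeat split; auto. intros i t Hi Ht Tt. exact (Hmin i Hi (ex_intro _ t (conj Ht Tt))).
Qed.

Lemma anchored_exists : exists x, anchored x.
Proof.
  assert (Hlast : forall u, exists k, P u ->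
    (exists s, nth_error u k = Some s /\ Sep s) /\
    forall k' s, nth_error u k' = Some s -> Sep s -> k' <= k).
  { intros u. destruct (classic (P u)) as [Pu|nPu]; [|exists 0; contradiction].
    destruct (greatest_witness (fun k => exists s, nth_error u k = Some s /\ Sep s) (length u))
      as [k [Hk Hmax]].
    - destruct (sep_on_P u Pu) as (k & s & H). eauto.
    - intros k [s [Hs _]]. apply Nat.lt_le_incl, nth_error_Some. congruence.
    - exists k. intros _. split; [exact Hk|]. intros k' s Hs Ss. apply Hmax. eauto. }
  set (x := fun u => proj1_sig (constructive_indefinite_description _ (Hlast u))).
  assert (Hx : forall u, P u -> past_sep x u /\ exists s, nth_error u (x u) = Some s /\ Sep s).
  { intros u Pu. unfold past_sep, x.
    destruct (constructive_indefinite_description _ (Hlast u)) as [k Hk]. simpl.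
    destruct (Hk Pu) as [[s [Hs Ss]] Hmax].
    split; [split; [|exact Hmax]|eauto].
    assert (k < length u) by (apply nth_error_Some; congruence).
    destruct (Nat.eq_dec k (length u - 1)) as [->|]; [|lia].
    rewrite (path_nth_last _ _ _ _ (P_path u Pu)) in Hs. injection Hs as <-.
    exfalso. exact (proj2 (sep_internal v Ss) eq_refl). }
  exists x. intros u Pu. destruct (Hx u Pu) as [Hpast [s [Hs Ss]]]. split; [exact Hpast|].
  destruct (proj2 HQS s Ss) as [q [Qq Hsq]]. apply In_nth_error in Hsq as [j Hj].
  exists q, j, s. split; [exact Qq|split; [exact Hs|split; [exact Hj|split]]].
  - right. exists u, (x u). pose proof (proj1 Hpast). repeat split; auto.
  - intros i t Hi Ht.
    exact (no_target_before_sep x q j s i t (fun u Pu => proj1 (Hx u Pu)) Qq Hj Ss Hi Ht).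
Qed.

Lemma anchored_max_exists : exists z, anchored z /\ forall y, anchored y -> ptr_le y z.
Proof.
  destruct anchored_exists as [x0 Hx0].
  assert (Hsup : forall u, exists n, P u ->
    (exists y, anchored y /\ y u = n) /\ forall y, anchored y -> y u <= n).
  { intros u. destruct (classic (P u)) as [Pu|nPu]; [|exists 0; contradiction].
    destruct (greatest_witness (fun n => exists y, anchored y /\ y u = n) (length u))
      as [n [Hn Hmax]].
    - eauto.
    - intros n [y [Hy <-]]. pose proof (proj1 (proj1 (Hy u Pu))). lia.
    - exists n. intros _. split; [exact Hn|]. intros y Hy. apply Hmax. eauto. }
  set (z := fun u => proj1_sig (constructive_indefinite_description _ (Hsup u))).
  assert (Hz : forall u, P u ->
    (exists y, anchored y /\ y u = z u) /\ forall y, anchored y -> y u <= z u).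
  { intros u. unfold z. destruct (constructive_indefinite_description _ (Hsup u)) as [n Hn]. exact Hn. }
  assert (Hle : forall y, anchored y -> ptr_le y z) by (intros y Hy u Pu; exact (proj2 (Hz u Pu) y Hy)).
  exists z. split; [|exact Hle].
  intros u Pu. destruct (proj1 (Hz u Pu)) as [y [Hy Hyz]].
  destruct (Hy u Pu) as [[Hlt Hsep] Hhit]. unfold past_sep. rewrite <- Hyz.
  split; [split; assumption|].
  apply (hit_anti y z u (y u) (Hle y Hy) Pu); [lia|exact Hhit].
Qed.

Lemma anchored_max_no_later_hit z u k :
  anchored z -> (forall y, anchored y -> ptr_le y z) ->
  P u -> z u < k -> k < length u - 1 -> ~ hit z u k.
Proof.
  intros Hz Hmax Pu Hk Hkl Hhit.
  set (z' := fun u' => if excluded_middle_informative (u' = u) then k else z u').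
  assert (E1 : z' u = k) by (unfold z'; destruct (excluded_middle_informative (u = u)); congruence).
  assert (E2 : forall u', u' <> u -> z' u' = z u')
    by (intros u' ne; unfold z'; destruct (excluded_middle_informative (u' = u)); congruence).
  assert (Hzz' : ptr_le z z').
  { intros u' _. destruct (classic (u' = u)) as [->|ne]; [rewrite E1; lia|rewrite (E2 u' ne); lia]. }
  assert (Hz' : anchored z').
  { intros u' Pu'. unfold past_sep. destruct (classic (u' = u)) as [->|ne].
    - rewrite E1. split; [split; [exact Hkl|]|].
      + intros k' s Hs Ss. pose proof (proj2 (proj1 (Hz u Pu)) k' s Hs Ss). lia.
      + apply (hit_anti z z' u k Hzz' Pu); [rewrite E1; lia|exact Hhit].
    - rewrite (E2 u' ne). destruct (Hz u' Pu') as [Hp Hh]. split; [exact Hp|].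
      apply (hit_anti z z' u' (z u') Hzz' Pu'); [|exact Hh].
      rewrite (E2 u' ne). pose proof (proj1 Hp). lia. }
  pose proof (Hmax z' Hz' u Pu). lia.
Qed.

Section Rerouted.
Variable x : list V -> nat.
Hypotheses (x_anchored : anchored x)
  (x_no_later_hit : forall u k, P u -> x u < k -> k < length u - 1 -> ~ hit x u k).

Lemma x_past_sep u : P u -> past_sep x u.
Proof. intros Pu. exact (proj1 (x_anchored u Pu)). Qed.

Lemma pointer_internal u w : P u -> nth_error u (x u) = Some w -> w <> r /\ w <> v.
Proof.
  intros Pu Hw. apply (tail_internal x w x_past_sep). exists u, (x u).
  pose proof (proj1 (x_past_sep u Pu)). repeat split; auto.
Qed.

Lemma pointer_unique u1 u2 w :
  P u1 -> P u2 -> nth_error u1 (x u1) = Some w -> nth_error u2 (x u2) = Some w -> u1 = u2.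
Proof.
  intros P1 P2 H1 H2. destruct (pointer_internal u1 w P1 H1).
  apply (path_system_shared G r v P u1 u2 w HP); eauto using nth_error_In.
Qed.

Lemma first_hit_tail_at_pointer q j w u k :
  Q q -> first_hit x q j w -> P u -> x u <= k < length u - 1 -> nth_error u k = Some w -> k = x u.
Proof.
  intros Qq Hh Pu [Hk Hkl] Hu. destruct (Nat.eq_dec k (x u)) as [|ne]; [assumption|].
  exfalso. apply (x_no_later_hit u k Pu ltac:(lia) Hkl). exists q, j, w. auto.
Qed.

Lemma first_hit_pointer q j w :
  Q q -> first_hit x q j w -> w = v \/ exists u, P u /\ nth_error u (x u) = Some w.
Proof.
  intros Qq Hh. pose proof Hh as (_ & [Hv|(u & k & Pu & Hk & Hu)] & _); [left; exact Hv|right].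
  exists u. rewrite <- (first_hit_tail_at_pointer q j w u k Qq Hh Pu Hk Hu). auto.
Qed.

Definition rerouted (q : list V) (j : nat) (w : V) (p : list V) : Prop :=
  (w = v /\ p = q) \/
  exists u, P u /\ nth_error u (x u) = Some w /\ p = firstn j q ++ skipn (x u) u.

Definition rerouted_system (p : list V) : Prop :=
  exists q j w, Q q /\ first_hit x q j w /\ rerouted q j w p.

Lemma rerouted_exists q j w : Q q -> first_hit x q j w -> exists p, rerouted q j w p.
Proof.
  intros Qq Hh. destruct (first_hit_pointer q j w Qq Hh) as [Hv|[u [Pu Hu]]].
  - exists q. left. auto.
  - exists (firstn j q ++ skipn (x u) u). right. exists u. auto.
Qed.

Lemma rerouted_unique q j w p1 p2 : rerouted q j w p1 -> rerouted q j w p2 -> p1 = p2.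
Proof.
  intros [[Hv ->]|(u1 & P1 & H1 & ->)] [[Hv' ->]|(u2 & P2 & H2 & ->)]; try reflexivity.
  - subst w. exfalso. exact (proj2 (pointer_internal u2 v P2 H2) eq_refl).
  - subst w. exfalso. exact (proj2 (pointer_internal u1 v P1 H1) eq_refl).
  - rewrite (pointer_unique u1 u2 w P1 P2 H1 H2). reflexivity.
Qed.

Lemma rerouted_is_path q j w p :
  Q q -> first_hit x q j w -> rerouted q j w p -> is_path G r v p.
Proof.
  intros Qq (Hj & _ & Hbefore) [[_ ->]|(u & Pu & Hu & ->)]; [exact (Q_path q Qq)|].
  pose proof (Q_path q Qq) as Hq. pose proof (P_path u Pu) as Hup.
  rewrite <- (firstn_skipn_middle _ _ Hj) in Hq. rewrite <- (firstn_skipn_middle _ _ Hu) in Hup.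
  rewrite (skipn_nth_error _ _ _ Hu).
  apply (is_path_glue G r v _ _ _ _ _ Hq Hup).
  intros t Ht Ht'. apply In_firstn_iff in Ht as [i [Hi Hqi]]. apply (Hbefore i t Hi Hqi).
  rewrite <- (skipn_nth_error _ _ _ Hu) in Ht'. apply In_skipn_iff in Ht' as [k [Hk Huk]].
  destruct (Nat.eq_dec k (length u - 1)) as [->|ne].
  - left. rewrite (path_nth_last _ _ _ _ (P_path u Pu)) in Huk. congruence.
  - right. exists u, k. assert (k < length u) by (apply nth_error_Some; congruence).
    repeat split; auto; lia.
Qed.

Lemma rerouted_vertex q j w p t :
  Q q -> first_hit x q j w -> rerouted q j w p -> In t p ->
  (exists i, i <= j /\ nth_error q i = Some t) \/ t = v \/
  exists u k, P u /\ nth_error u (x u) = Some w /\ x u <= k < length u - 1 /\ nth_error u k = Some t.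
Proof.
  intros Qq (Hj & _ & _) [[-> ->]|(u & Pu & Hu & ->)] Ht.
  - left. apply In_nth_error in Ht as [i Hi]. exists i. split; [|exact Hi].
    rewrite (path_index_last _ _ _ _ _ (Q_path q Qq) Hj).
    assert (i < length q) by (apply nth_error_Some; congruence). lia.
  - apply in_app_or in Ht as [Ht|Ht].
    + left. apply In_firstn_iff in Ht as [i [Hi Hqi]]. exists i. split; [lia|exact Hqi].
    + apply In_skipn_iff in Ht as [k [Hk Huk]]. right.
      destruct (Nat.eq_dec k (length u - 1)) as [->|ne].
      * left. rewrite (path_nth_last _ _ _ _ (P_path u Pu)) in Huk. congruence.
      * right. exists u, k. assert (k < length u) by (apply nth_error_Some; congruence).
        repeat split; auto; lia.
Qed.

Lemma prefix_tail_shared q1 j1 w1 q2 j2 w2 i t u k :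
  Q q1 -> Q q2 -> q1 <> q2 -> first_hit x q1 j1 w1 -> first_hit x q2 j2 w2 ->
  i <= j1 -> nth_error q1 i = Some t ->
  P u -> nth_error u (x u) = Some w2 -> x u <= k < length u - 1 -> nth_error u k = Some t ->
  t = r \/ t = v.
Proof.
  intros Q1 Q2 nq H1 H2 Hi Ht Pu Hw Hk Hu.
  assert (Tt : target x t) by (right; exists u, k; auto).
  assert (i = j1) as ->.
  { destruct (Nat.eq_dec i j1) as [|ne]; [assumption|].
    exfalso. apply (proj2 (proj2 H1) i t ltac:(lia) Ht Tt). }
  assert (H1' : first_hit x q1 j1 t) by (destruct H1 as (Hj & _ & Hb); repeat split; auto).
  rewrite (first_hit_tail_at_pointer q1 j1 t u k Q1 H1' Pu Hk Hu) in Hu.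
  rewrite Hu in Hw. injection Hw as <-.
  exact (proj2 HQ q1 q2 t Q1 Q2 nq (nth_error_In _ _ Ht) (nth_error_In _ _ (proj1 H2))).
Qed.

Lemma rerouted_system_disjoint p1 p2 t :
  rerouted_system p1 -> rerouted_system p2 -> p1 <> p2 -> In t p1 -> In t p2 -> t = r \/ t = v.
Proof.
  intros (q1 & j1 & w1 & Q1 & H1 & R1) (q2 & j2 & w2 & Q2 & H2 & R2) ne T1 T2.
  assert (nq : q1 <> q2).
  { intros <-. destruct (first_hit_unique x q1 j1 w1 j2 w2 H1 H2) as [<- <-].
    exact (ne (rerouted_unique q1 j1 w1 p1 p2 R1 R2)). }
  destruct (rerouted_vertex q1 j1 w1 p1 t Q1 H1 R1 T1)
    as [(i1 & Hi1 & A1)|[Hv|(u1 & k1 & P1 & U1 & K1 & B1)]]; [|now right|];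
  destruct (rerouted_vertex q2 j2 w2 p2 t Q2 H2 R2 T2)
    as [(i2 & Hi2 & A2)|[Hv|(u2 & k2 & P2 & U2 & K2 & B2)]]; try now right.
  - exact (proj2 HQ q1 q2 t Q1 Q2 nq (nth_error_In _ _ A1) (nth_error_In _ _ A2)).
  - exact (prefix_tail_shared q1 j1 w1 q2 j2 w2 i1 t u2 k2 Q1 Q2 nq H1 H2 Hi1 A1 P2 U2 K2 B2).
  - exact (prefix_tail_shared q2 j2 w2 q1 j1 w1 i2 t u1 k1 Q2 Q1 (not_eq_sym nq)
      H2 H1 Hi2 A2 P1 U1 K1 B1).
  - exfalso.
    destruct (tail_internal x t x_past_sep (ex_intro _ u1 (ex_intro _ k1 (conj P1 (conj K1 B1))))).
    assert (u1 = u2) as <-.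
    { apply (path_system_shared G r v P u1 u2 t HP); eauto using nth_error_In. }
    rewrite U1 in U2. injection U2 as <-.
    destruct (pointer_internal u1 w1 P1 U1) as [Hr' Hv'].
    destruct (proj2 HQ q1 q2 w1 Q1 Q2 nq (nth_error_In _ _ (proj1 H1)) (nth_error_In _ _ (proj1 H2)));
      contradiction.
Qed.

Lemma rerouted_sep_in_q q j w p s :
  Q q -> first_hit x q j w -> rerouted q j w p -> In s p -> Sep s -> In s q.
Proof.
  intros Qq Hh Rp Hs Ss.
  destruct (rerouted_vertex q j w p s Qq Hh Rp Hs) as [(i & _ & Hi)|[->|(u & k & Pu & Hu & Hk & Huk)]].
  - exact (nth_error_In _ _ Hi).
  - exfalso. exact (proj2 (sep_internal v Ss) eq_refl).
  - pose proof (proj2 (x_past_sep u Pu) k s Huk Ss). assert (k = x u) as -> by lia.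
    rewrite Huk in Hu. injection Hu as ->. exact (nth_error_In _ _ (proj1 Hh)).
Qed.

Lemma rerouted_contains_sep q j w p js s :
  Q q -> first_hit x q j w -> rerouted q j w p -> nth_error q js = Some s -> Sep s -> In s p.
Proof.
  intros Qq Hh Rp Hs Ss. pose proof (first_hit_after_sep x q js s j w x_past_sep Qq Hs Ss Hh).
  destruct Rp as [[_ ->]|(u & Pu & Hu & ->)]; [exact (nth_error_In _ _ Hs)|].
  apply in_or_app. destruct (Nat.eq_dec js j) as [->|ne].
  - right. rewrite (skipn_nth_error _ _ _ Hu). left. destruct Hh as (Hj & _). congruence.
  - left. apply In_firstn_iff. exists js. split; [lia|exact Hs].
Qed.

Lemma rerouted_system_orthogonal : orthogonal rerouted_system Sep.
Proof.
  split.
  - intros p (q & j & w & Qq & Hh & Rp).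
    destruct (proj1 HQS q Qq) as [s [[Hsq Ss] Huniq]].
    exists s. split.
    + split; [|exact Ss]. apply In_nth_error in Hsq as [js Hs].
      exact (rerouted_contains_sep q j w p js s Qq Hh Rp Hs Ss).
    + intros t [Ht St]. apply Huniq.
      split; [exact (rerouted_sep_in_q q j w p t Qq Hh Rp Ht St)|exact St].
  - intros s Ss. destruct (proj2 HQS s Ss) as [q [Qq Hsq]]. apply In_nth_error in Hsq as [js Hs].
    destruct (first_hit_exists x q Qq) as (j & w & Hh).
    destruct (rerouted_exists q j w Qq Hh) as [p Rp].
    exists p. split; [exists q, j, w; auto|exact (rerouted_contains_sep q j w p js s Qq Hh Rp Hs Ss)].
Qed.

Lemma rerouted_system_Eplus e : Eplus P e -> Eplus rerouted_system e.
Proof.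
  intros (u & Pu & l & Hl).
  destruct (proj2 (x_anchored u Pu)) as (q & j & w & Qq & Hu & Hh).
  exists (firstn j q ++ skipn (x u) u). split.
  - exists q, j, w. split; [exact Qq|split; [exact Hh|]]. right. exists u. auto.
  - exists (firstn j q ++ skipn (x u) l). pose proof (proj1 (x_past_sep u Pu)) as Hx.
    subst u. rewrite length_app in Hx. simpl in Hx.
    rewrite skipn_app. replace (x (l ++ [fst e; snd e]) - length l) with 0 by lia.
    rewrite app_assoc. reflexivity.
Qed.

Lemma rerouted_system_spec :
  path_system G r v rerouted_system /\ orthogonal rerouted_system Sep /\
  forall e, Eplus P e -> Eplus rerouted_system e.
Proof.
  split; [split|split].
  - intros p (q & j & w & Qq & Hh & Rp). exact (rerouted_is_path q j w p Qq Hh Rp).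
  - intros p1 p2 t R1 R2 ne T1 T2. exact (rerouted_system_disjoint p1 p2 t R1 R2 ne T1 T2).
  - exact rerouted_system_orthogonal.
  - exact rerouted_system_Eplus.
Qed.

End Rerouted.

Lemma reroute_onto_separation : exists R, path_system G r v R /\ orthogonal R Sep /\
  forall e, Eplus P e -> Eplus R e.
Proof.
  destruct anchored_max_exists as (x & Hx & Hmax).
  exists (rerouted_system x).
  exact (rerouted_system_spec x Hx (fun u k Pu => anchored_max_no_later_hit x u k Hx Hmax Pu)).
Qed.

End Rerouting.

Theorem lemma2p4 (V : Type) (E : V -> V -> Prop) (r v : V)
  (Hloop : loopless E) (Hv : v <> r)
  (I : V * V -> Prop) (HI : calG (del_edge E r v) r v I)
  (S : V -> Prop) (HS : frakS E r v S) :
  exists R : list V -> Prop,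
    frakP E r v R /\ orthogonal R S /\ (forall e, I e -> Eplus R e).
Proof.
  destruct HI as [_ [P [HP HIP]]].
  destruct HS as [HSsep [Q [HQ HQS]]].
  destruct (reroute_onto_separation (del_edge E r v) r v S Q P HSsep HQ HQS HP)
    as (R & HR & HRS & HRI).
  exists R. split; [split; [exact HR|exists S; auto]|split; [exact HRS|]].
  intros e Ie. apply HRI, HIP, Ie.
Qed.
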